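(* Let $p$ be a prime and let $r,\alpha,\gamma$ be positive integers with $\alpha>1$ and $p\nmid\gamma$. If $p^{\alpha}\gamma\in F_r$, then $p^{\alpha-1}\gamma\in F_r$.
   Context: For a positive integer $r$, $S_r$ is the multiplicative arithmetic function with $S_r(q^{\beta})=0$ if $q\leq r$ and $S_r(q^{\beta})=q^{\beta-1}(q-r)$ if $q>r$, for all primes $q$ and positive integers $\beta$. $B_r=\{n\in\mathbb{N}: S_r(n)>0\}$ (positive integers whose smallest prime factor exceeds $r$, together with $1$). $F_r$ is the set of $n\in B_r$ such that $S_r(n)<S_r(m)$ for all $m\in B_r$ with $m>n$. *)

From mathcomp Require Import all_boot.
Set Implicit Arguments. Unset Strict Implicit. Unset Printing Implicit Defensive.

(* Natural-number valued (all values are >= 0). *)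
Definition S (r n : nat) : nat :=
  \prod_(q <- primes n) (if q <= r then 0 else q ^ (logn q n).-1 * (q - r)).

Definition inB (r n : nat) : Prop := 0 < n /\ 0 < S r n.

Definition inF (r n : nat) : Prop :=
  inB r n /\ forall m, inB r m -> n < m -> S r n < S r m.

From mathcomp Require Import all_boot.

(* Write n = p m with p | m.  Multiplying by a prime already dividing the
   argument multiplies S_r by exactly p, so S_r(n) = p S_r(m); in general
   S_r(p k) <= p S_r(k), and p > r because S_r(n) > 0, so p k stays in B_r.
   Hence for k > m in B_r we get p k > n and
   p S_r(m) = S_r(n) < S_r(p k) <= p S_r(k). *)

Definition Spow (r q k : nat) : nat := if q <= r then 0 else q ^ k.-1 * (q - r).

Lemma S_Spow r n : S r n = \prod_(q <- primes n) Spow r q (logn q n).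
Proof. by []. Qed.

Lemma S_gt0_primes r n q : 0 < S r n -> q \in primes n -> r < q.
Proof.
move=> Sn0 qn; move: Sn0; rewrite S_Spow (bigD1_seq q) ?primes_uniq //=.
by rewrite muln_gt0 /Spow; case: (leqP q r).
Qed.

Lemma logn_mul_prime_neq p m q : prime p -> 0 < m -> q != p ->
  logn q (p * m) = logn q m.
Proof.
move=> pp m0 qp; rewrite (lognM _ (prime_gt0 pp) m0) (logn_prime q pp).
by rewrite (negbTE qp).
Qed.

Lemma S_mul_prime_dvd r p m : prime p -> 0 < m -> p %| m ->
  S r (p * m) = p * S r m.
Proof.
move=> pp m0 pm.
have pm_primes : p \in primes m by rewrite mem_primes pp m0.
have same_primes : perm_eq (primes (p * m)) (primes m).
  apply: uniq_perm; rewrite ?primes_uniq // => q.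
  rewrite (primesM _ (prime_gt0 pp) m0) primes_prime // inE.
  by case: eqP => // ->.
rewrite !S_Spow (perm_big _ same_primes) /= !(bigD1_seq p) ?primes_uniq //.
rewrite mulnA; congr (_ * _).
  rewrite (lognM _ (prime_gt0 pp) m0) (logn_prime p pp) eqxx /Spow.
  have : 0 < logn p m by rewrite logn_gt0.
  case: (logn p m) => // k _; case: (p <= r); first by rewrite muln0.
  by rewrite add1n /= expnS mulnA.
by apply: eq_bigr => q qp; rewrite logn_mul_prime_neq.
Qed.

Lemma S_mul_prime_ndvd r p m : prime p -> 0 < m -> ~~ (p %| m) -> r < p ->
  S r (p * m) = (p - r) * S r m.
Proof.
move=> pp m0 pm rp.
have pm_primes : p \notin primes m by rewrite mem_primes pp m0.
have new_primes : perm_eq (primes (p * m)) (p :: primes m).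
  apply: uniq_perm; rewrite /= ?pm_primes ?primes_uniq // => q.
  by rewrite (primesM _ (prime_gt0 pp) m0) primes_prime // inE.
rewrite !S_Spow (perm_big _ new_primes) /= big_cons; congr (_ * _).
  rewrite (lognM _ (prime_gt0 pp) m0) (logn_prime p pp) eqxx.
  have -> : logn p m = 0 by apply/eqP; rewrite eqn0Ngt logn_gt0.
  by rewrite /Spow leqNgt rp /= mul1n.
apply: eq_big_seq => q qm; rewrite logn_mul_prime_neq //.
by apply: contraNneq pm_primes => <-.
Qed.

Lemma S_mul_prime_le r p m : prime p -> 0 < m -> r < p ->
  S r (p * m) <= p * S r m.
Proof.
move=> pp m0 rp; have [pm | pm] := boolP (p %| m).
  by rewrite S_mul_prime_dvd.
by rewrite S_mul_prime_ndvd // leq_mul2r leq_subr orbT.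
Qed.

Lemma inB_mul_prime r p m : prime p -> r < p -> inB r m -> inB r (p * m).
Proof.
move=> pp rp [m0 Sm0]; have p0 := prime_gt0 pp.
split; first by rewrite muln_gt0 p0.
have [pm | pm] := boolP (p %| m).
  by rewrite S_mul_prime_dvd // muln_gt0 p0.
by rewrite S_mul_prime_ndvd // muln_gt0 subn_gt0 rp.
Qed.

Lemma inF_div_prime r p m : prime p -> p %| m -> inF r (p * m) -> inF r m.
Proof.
move=> pp pm [[pm0 Spm0] Fpm]; have p0 := prime_gt0 pp.
have m0 : 0 < m by move: pm0; rewrite muln_gt0 => /andP[].
have S_pm : S r (p * m) = p * S r m by rewrite S_mul_prime_dvd.
have rp : r < p.
  by apply: S_gt0_primes Spm0 _; rewrite mem_primes pp pm0 dvdn_mulr.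
split.
  by split=> //; move: Spm0; rewrite S_pm muln_gt0 => /andP[].
move=> k [k0 Sk0] mk.
have pk_inB : inB r (p * k) by apply: inB_mul_prime.
have := Fpm _ pk_inB; rewrite ltn_pmul2l // S_pm => /(_ mk) Spk.
by rewrite -(ltn_pmul2l p0) (leq_trans Spk) // S_mul_prime_le.
Qed.

Theorem lemma3p2 (p r alpha gamma : nat) :
  prime p -> 0 < r -> 1 < alpha -> 0 < gamma -> ~~ (p %| gamma) ->
  inF r (p ^ alpha * gamma) -> inF r (p ^ alpha.-1 * gamma).
Proof.
move=> pp _ alpha_gt1 _ _.
have [a ->] : exists a, alpha = a.+2 by case: alpha alpha_gt1 => [|[|a]] //; exists a.
rewrite expnS -mulnA; apply: inF_div_prime => //.
by rewrite dvdn_mulr // expnS dvdn_mulr.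
Qed.
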